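(* Let $\omega>\gamma^2/4$. There exists $\eta>0$ (small) such that for $\alpha=0,1$, $\|Q_{\omega,\gamma}^{-1}e^{\eta|x|}\partial_x^\alpha\mathcal{Y}_\pm\|_{L^\infty(\mathbb{R}\setminus\{0\})}<\infty$.
   Context: Fix $\gamma<0$, $p>5$, $\omega>\gamma^2/4$, and $Q_{\omega,\gamma}(x)=\big[\tfrac{(p+1)\omega}{2}\operatorname{sech}^2\big(\tfrac{(p-1)\sqrt\omega}{2}|x|+\tanh^{-1}(\tfrac{\gamma}{2\sqrt\omega})\big)\big]^{1/(p-1)}$ (positive, decaying like $e^{-\sqrt\omega|x|}$). Let $\mathcal D_{\mathrm{even}}=\{f\in H^1(\mathbb{R})\cap H^2(\mathbb{R}\setminus\{0\})\text{ even}: f'(0+)-f'(0-)=-\gamma f(0)\}$, and on real functions in $\mathcal D_{\mathrm{even}}$ let $L^-f=-f''+\omega f-Q_{\omega,\gamma}^{p-1}f$, $L^+f=-f''+\omega f-pQ_{\omega,\gamma}^{p-1}f$. For $f=f_1+if_2$ set $\mathcal{L}f=-L^-f_2+iL^+f_1$. $\mathcal{Y}_+=\mathcal Y_1+i\mathcal Y_2$ ($\mathcal Y_j\in\mathcal D_{\mathrm{even}}$ real) is the eigenfunction of $\mathcal L$ for its simple positive eigenvalue $e_\omega>0$ on even functions, i.e. $L^+\mathcal{Y}_1=e_\omega\mathcal{Y}_2$, $L^-\mathcal{Y}_2=-e_\omega\mathcal{Y}_1$; $\mathcal Y_-=\overline{\mathcal Y_+}$. The derivative $\partial_x\mathcal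 Y_\pm$ is taken on $\mathbb{R}\setminus\{0\}$. *)

From Stdlib Require Import Reals.
From Coquelicot Require Import Coquelicot.
Open Scope R_scope.

Definition atanh (y : R) : R := ln ((1 + y) / (1 - y)) / 2.

Definition sech (y : R) : R := / cosh y.

Definition Qwg (p omega gamma : R) (x : R) : R :=
  Rpower ((p + 1) * omega / 2 *
          (sech ((p - 1) * sqrt omega / 2 * Rabs x + atanh (gamma / (2 * sqrt omega)))) ^ 2)
         (1 / (p - 1)).

Definition D2 (f : R -> R) (x : R) : R := Derive (Derive f) x.

Definition L2R (g : R -> R) : Prop :=
  ex_RInt_gen (fun x => g x ^ 2) (Rbar_locally m_infty) (at_point 0) /\
  ex_RInt_gen (fun x => g x ^ 2) (at_point 0) (Rbar_locally p_infty).

(* D_even: even functions in H^1(R) ∩ H^2(R\{0}) with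
   f'(0+) - f'(0-) = - gamma f(0).  Regularity is taken classically:
   f continuous at 0, twice differentiable on R\{0}, f, f', f'' in L^2,
   and the one-sided limits f'(0±) exist. *)
Definition D_even (gamma : R) (f : R -> R) : Prop :=
  (forall x, f (- x) = f x) /\
  continuous f 0 /\
  (forall x, x <> 0 -> ex_derive f x /\ ex_derive (Derive f) x) /\
  L2R f /\ L2R (Derive f) /\ L2R (D2 f) /\
  exists dp dm : R,
    filterlim (Derive f) (at_right 0) (locally dp) /\
    filterlim (Derive f) (at_left 0) (locally dm) /\
    dp - dm = - gamma * f 0.

Definition Lminus (p omega gamma : R) (f : R -> R) (x : R) : R :=
  - D2 f x + omega * f x - Rpower (Qwg p omega gamma x) (p - 1) * f x.

Definition Lplus (p omega gamma : R) (f : R -> R) (x : R) : R :=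
  - D2 f x + omega * f x - p * Rpower (Qwg p omega gamma x) (p - 1) * f x.

Definition weighted_bounded (p omega gamma eta : R) (g : R -> R) : Prop :=
  exists C : R, forall x : R, x <> 0 ->
    Rabs (exp (eta * Rabs x) * g x / Qwg p omega gamma x) <= C.

From Stdlib Require Import Reals Lra Psatz Classical.
From Coquelicot Require Import Coquelicot.
Open Scope R_scope.

(* On [x > 0] put [u = Y1 + i Y2]. The eigenvalue equations read [u'' = (omega + i e) u - F]
   with forcing [F = Q^(p-1) (p Y1 + i Y2)], which decays like [exp (-(p-1) sqrt omega x)]
   because [u] is bounded ([Y1, Y2] are in [H^1]). Let [lambda = k - i l] be the square root
   of [omega + i e] with [k > sqrt omega]. Then [w = u' + lambda u] solves
   [w' = lambda w - F]: the growing mode is excluded since [|w|^2] is integrable, so [|w|^2]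
   decays like [F]. Next [u' + lambda u = w] is damped at rate [k], so [|u|^2 + |u'|^2]
   decays like [exp (-2 mu x)] for every [mu < min k ((p-1) sqrt omega)], in particular for
   some [mu > sqrt omega]. Since [Q >= c exp (-sqrt omega |x|)] and [Y1, Y2] are even, the
   weight [exp (eta |x|) / Q] with [eta = mu - sqrt omega] is compensated. *)

Definition bounded_tail_integrals (g : R -> R) : Prop :=
  exists S, forall x y, 0 <= x <= y -> ex_RInt g x y /\ RInt g x y <= S.

Lemma bounded_tail_integrals_of_ex_RInt_gen (g : R -> R) :
  (forall x, 0 <= g x) ->
  ex_RInt_gen g (at_point 0) (Rbar_locally p_infty) ->
  bounded_tail_integrals g.
Proof.
  intros Hpos [l Hl].
  destruct (Hl (ball l 1) (locally_ball l (mkposreal 1 Rlt_0_1)))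
    as [P Q HP [M HM] HPQ].
  exists (Rabs l + 1). intros x y Hxy.
  set (Y := Rmax y (M + 1)).
  assert (HyY : y <= Y) by apply Rmax_l.
  destruct (HPQ 0 Y HP (HM Y ltac:(unfold Y; generalize (Rmax_r y (M + 1)); lra)))
    as [v [Hv Hvl]].
  assert (E0Y : ex_RInt g 0 Y) by (exists v; exact Hv).
  assert (E0y : ex_RInt g 0 y) by (apply (ex_RInt_Chasles_1 g 0 y Y); [lra|auto]).
  assert (EyY : ex_RInt g y Y) by (apply (ex_RInt_Chasles_2 g 0 y Y); [lra|auto]).
  assert (E0x : ex_RInt g 0 x) by (apply (ex_RInt_Chasles_1 g 0 x y); [lra|auto]).
  assert (Exy : ex_RInt g x y) by (apply (ex_RInt_Chasles_2 g 0 x y); [lra|auto]).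
  split; [exact Exy|].
  assert (C1 := RInt_Chasles g 0 x y E0x Exy).
  assert (C2 := RInt_Chasles g 0 y Y E0y EyY).
  assert (P1 := RInt_ge_0 g 0 x ltac:(lra) E0x (fun t _ => Hpos t)).
  assert (P2 := RInt_ge_0 g y Y ltac:(lra) EyY (fun t _ => Hpos t)).
  rewrite (is_RInt_unique g 0 Y v Hv) in C2.
  change (plus (RInt g 0 x) (RInt g x y) = RInt g 0 y) with
    (RInt g 0 x + RInt g x y = RInt g 0 y) in C1.
  change (plus (RInt g 0 y) (RInt g y Y) = v) with (RInt g 0 y + RInt g y Y = v) in C2.
  assert (Hv1 : Rabs (v - l) < 1) by exact Hvl.
  generalize (Rabs_def2 _ _ Hv1) (Rle_abs l). lra.
Qed.

Lemma bounded_tail_integrals_plus (g1 g2 : R -> R) :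
  bounded_tail_integrals g1 -> bounded_tail_integrals g2 ->
  bounded_tail_integrals (fun t => g1 t + g2 t).
Proof.
  intros [S1 H1] [S2 H2]. exists (S1 + S2). intros x y Hxy.
  destruct (H1 x y Hxy) as [E1 B1], (H2 x y Hxy) as [E2 B2].
  split; [exact (ex_RInt_plus g1 g2 x y E1 E2)|].
  generalize (RInt_plus g1 g2 x y E1 E2). change plus with Rplus. intros ->. lra.
Qed.

Lemma bounded_tail_integrals_sq_of_L2R (f : R -> R) :
  L2R f -> bounded_tail_integrals (fun t => f t ^ 2).
Proof.
  intros [_ H]. apply bounded_tail_integrals_of_ex_RInt_gen; [|exact H].
  intro; apply pow2_ge_0.
Qed.

Lemma exists_le_of_RInt_le (h : R -> R) (a b S : R) :
  a < b -> ex_RInt h a b -> RInt h a b <= S ->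
  exists y, a <= y <= b /\ h y <= (S + 1) / (b - a).
Proof.
  intros Hab Ex Hle. apply NNPP. intro Hn.
  assert (Hgt : forall y, a <= y <= b -> (S + 1) / (b - a) <= h y).
  { intros y Hy. apply Rnot_lt_le. intro Hc. apply Hn. exists y. split; [exact Hy | lra]. }
  assert (H := RInt_le (fun _ => (S + 1) / (b - a)) h a b ltac:(lra) (ex_RInt_const _ _ _) Ex
                 (fun t Ht => Hgt t ltac:(lra))).
  rewrite RInt_const in H.
  change (scal (b - a) ((S + 1) / (b - a))) with ((b - a) * ((S + 1) / (b - a))) in H.
  replace ((b - a) * ((S + 1) / (b - a))) with (S + 1) in H by (field; lra).
  lra.
Qed.

Lemma bounded_tail_integrals_small (h : R -> R) :
  (forall t, 0 <= h t) -> bounded_tail_integrals h ->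
  forall x eps, 0 < x -> 0 < eps -> exists X, x <= X /\ h X <= eps.
Proof.
  intros Hpos [S HS] x eps Hx He.
  assert (HS0 : 0 <= S).
  { destruct (HS x x ltac:(lra)) as [_ B]. rewrite RInt_point in B. exact B. }
  set (L := (S + 1) / eps).
  assert (HL : 0 < L) by (apply Rdiv_lt_0_compat; lra).
  destruct (HS x (x + L) ltac:(lra)) as [E B].
  destruct (exists_le_of_RInt_le h x (x + L) S ltac:(lra) E B) as [X [HX HhX]].
  exists X. split; [lra|].
  replace ((S + 1) / (x + L - x)) with eps in HhX; [exact HhX|].
  unfold L. field. lra.
Qed.

(* Pick [y] in [[x, x+1]] with [f y ^ 2 + f' y ^ 2 <= S + 1]; then
   [f x ^ 2 = f y ^ 2 - int_x^y 2 f f' <= f y ^ 2 + int_x^y (f ^ 2 + f' ^ 2)]. *)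
Lemma sq_bounded_of_L2R (f : R -> R) :
  (forall x, 0 < x -> ex_derive f x /\ ex_derive (Derive f) x) ->
  L2R f -> L2R (Derive f) -> exists B, forall x, 0 < x -> f x ^ 2 <= B.
Proof.
  intros Hd Hf Hf'.
  set (h := fun t => f t ^ 2 + Derive f t ^ 2).
  destruct (bounded_tail_integrals_plus _ _ (bounded_tail_integrals_sq_of_L2R f Hf)
              (bounded_tail_integrals_sq_of_L2R _ Hf')) as [S HS].
  exists (S + 1 + S). intros x Hx.
  destruct (HS x (x + 1) ltac:(lra)) as [E1 B1].
  destruct (exists_le_of_RInt_le h x (x + 1) S ltac:(lra) E1 B1) as [y [Hy Hhy]].
  replace (x + 1 - x) with 1 in Hhy by ring. rewrite Rdiv_1_r in Hhy.
  destruct (HS x y ltac:(lra)) as [E2 B2].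
  assert (Hseg : forall t, Rmin x y <= t <= Rmax x y -> 0 < t).
  { intros t Ht. rewrite Rmin_left in Ht by lra. lra. }
  assert (FTC : is_RInt (fun t => 2 * f t * Derive f t) x y (f y ^ 2 - f x ^ 2)).
  { apply (is_RInt_derive (fun t => f t ^ 2)).
    - intros t Ht. destruct (Hd t (Hseg t Ht)) as [D1 _].
      auto_derive; [exact D1 | change (Derive (fun s => f s) t) with (Derive f t); ring].
    - intros t Ht. destruct (Hd t (Hseg t Ht)) as [D1 D2].
      apply (@ex_derive_continuous R_AbsRing R_NormedModule). auto_derive; auto. }
  assert (Hle : RInt (fun t => - h t) x y <= RInt (fun t => 2 * f t * Derive f t) x y).
  { apply RInt_le; [lra | exact (ex_RInt_opp h x y E2) | eexists; exact FTC |].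
    intros t _. unfold h. generalize (pow2_ge_0 (f t + Derive f t)). nra. }
  rewrite (is_RInt_unique _ _ _ _ FTC) in Hle.
  generalize (RInt_opp h x y E2). change opp with Ropp. intros Hopp. rewrite Hopp in Hle.
  change (RInt h x y <= S) in B2. unfold h in Hhy. generalize (pow2_ge_0 (Derive f y)). lra.
Qed.

Lemma le_of_derive_nonneg (phi dphi : R -> R) (x X : R) : x <= X ->
  (forall t, x <= t <= X -> is_derive phi t (dphi t)) ->
  (forall t, x <= t <= X -> 0 <= dphi t) -> phi x <= phi X.
Proof.
  intros HxX Hd Hp.
  destruct (MVT_gen phi x X dphi) as [c [Hc E]];
    rewrite ?Rmin_left, ?Rmax_right in * by lra.
  - intros t Ht. apply Hd. lra.
  - intros t Ht. apply continuity_pt_filterlim, (@ex_derive_continuous R_AbsRing R_NormedModule).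
    eexists. apply Hd. lra.
  - generalize (Rmult_le_pos (dphi c) (X - x) (Hp c Hc) ltac:(lra)). lra.
Qed.

Lemma exp_le_exp (x y : R) : x <= y -> exp x <= exp y.
Proof. intros [H | ->]; [apply Rlt_le, exp_increasing, H | apply Rle_refl]. Qed.

(* [t |-> exp(-k t) N(t) - C/(k+m) exp(-(k+m) t)] is nondecreasing, and its values far
   out are arbitrarily small. *)
Lemma decay_of_growth_inequality (N dN : R -> R) (k m C : R) :
  0 < k -> 0 < m -> 0 <= C ->
  (forall t, 0 < t -> is_derive N t (dN t)) ->
  (forall t, 0 < t -> k * N t - C * exp (- m * t) <= dN t) ->
  (forall x eps, 0 < x -> 0 < eps -> exists X, x <= X /\ N X <= eps) ->
  forall x, 0 < x -> N x <= C / (k + m) * exp (- m * x).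
Proof.
  intros Hk Hm HC Hd Hgrowth Hsmall x Hx.
  set (phi := fun t => exp (- k * t) * N t - C / (k + m) * exp (- (k + m) * t)).
  assert (Hphi : forall X, x <= X -> phi x <= phi X).
  { intros X HxX.
    apply (le_of_derive_nonneg phi
      (fun t => exp (- k * t) * (dN t - k * N t + C * exp (- m * t))) x X HxX).
    - intros t Ht. specialize (Hd t ltac:(lra)). unfold phi.
      auto_derive; [eexists; exact Hd|].
      replace (Derive (fun s : R => N s) t) with (dN t)
        by (symmetry; exact (is_derive_unique _ _ _ Hd)).
      replace (- (k + m) * t) with (- k * t + - m * t) by ring. rewrite exp_plus.
      field. lra.
    - intros t Ht. apply Rmult_le_pos; [apply Rlt_le, exp_pos|].
      generalize (Hgrowth t ltac:(lra)). lra. }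
  apply Rle_plus_epsilon. intros eps Heps.
  destruct (Hsmall x eps Hx Heps) as [X [HxX HX]].
  specialize (Hphi X HxX). unfold phi in Hphi.
  assert (Hek : exp (- k * X) <= exp (- k * x)) by (apply exp_le_exp; nra).
  assert (HX' : exp (- k * X) * N X <= exp (- k * x) * eps).
  { apply Rle_trans with (exp (- k * X) * eps).
    - apply Rmult_le_compat_l; [apply Rlt_le, exp_pos | exact HX].
    - apply Rmult_le_compat_r; lra. }
  assert (HCX : 0 <= C / (k + m) * exp (- (k + m) * X)).
  { apply Rmult_le_pos; [apply Rdiv_le_0_compat|apply Rlt_le, exp_pos]; lra. }
  replace (- (k + m) * x) with (- k * x + - m * x) in Hphi by ring.
  rewrite exp_plus in Hphi.
  apply (Rmult_le_reg_l (exp (- k * x))); [apply exp_pos|]. nra.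
Qed.

(* [t |-> exp(alpha t) rho(t) + C/(beta-alpha) exp(-(beta-alpha) t)] is nonincreasing. *)
Lemma decay_of_damping_inequality (rho drho : R -> R) (alpha beta C B : R) :
  0 < alpha -> alpha < beta -> 0 <= C ->
  (forall t, 0 < t -> is_derive rho t (drho t)) ->
  (forall t, 0 < t -> drho t <= - alpha * rho t + C * exp (- beta * t)) ->
  (forall t, 0 < t -> 0 <= rho t <= B) ->
  exists R0, forall x, 0 < x -> rho x <= R0 * exp (- alpha * x).
Proof.
  intros Ha Hab HC Hd Hdamp Hbd.
  set (psi := fun t => exp (alpha * t) * rho t
                       + C / (beta - alpha) * exp (- (beta - alpha) * t)).
  assert (Hpsi : forall x, 1 <= x -> psi x <= psi 1).
  { intros x Hx. apply Ropp_le_cancel.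
    apply (le_of_derive_nonneg (fun t => - psi t)
      (fun t => exp (alpha * t) * (- alpha * rho t + C * exp (- beta * t) - drho t)) 1 x Hx).
    - intros t Ht. specialize (Hd t ltac:(lra)). unfold psi.
      auto_derive; [eexists; exact Hd|].
      replace (Derive (fun s : R => rho s) t) with (drho t)
        by (symmetry; exact (is_derive_unique _ _ _ Hd)).
      replace (- (beta - alpha) * t) with (alpha * t + - beta * t) by ring. rewrite exp_plus.
      field. lra.
    - intros t Ht. apply Rmult_le_pos; [apply Rlt_le, exp_pos|].
      generalize (Hdamp t ltac:(lra)). lra. }
  exists (Rmax (psi 1) (exp alpha * B)). intros x Hx.
  assert (Hinv : exp (- alpha * x) * exp (alpha * x) = 1).
  { rewrite <- exp_plus. replace (- alpha * x + alpha * x) with 0 by ring. apply exp_0. }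
  assert (Hscaled : exp (alpha * x) * rho x <= Rmax (psi 1) (exp alpha * B)).
  { destruct (Rle_or_lt 1 x) as [H1 | H1].
    - apply Rle_trans with (psi 1); [|apply Rmax_l].
      apply Rle_trans with (psi x); [|exact (Hpsi x H1)].
      unfold psi. assert (0 <= C / (beta - alpha) * exp (- (beta - alpha) * x)).
      { apply Rmult_le_pos; [apply Rdiv_le_0_compat|apply Rlt_le, exp_pos]; lra. }
      lra.
    - apply Rle_trans with (exp alpha * B); [|apply Rmax_r].
      assert (exp (alpha * x) <= exp alpha) by (apply exp_le_exp; nra).
      specialize (Hbd x Hx). apply Rmult_le_compat; try apply Rlt_le, exp_pos; lra. }
  apply (Rmult_le_compat_l (exp (- alpha * x))) in Hscaled; [|apply Rlt_le, exp_pos].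
  rewrite <- Rmult_assoc, Hinv, Rmult_1_l in Hscaled. lra.
Qed.

Lemma sech_pos (y : R) : 0 < sech y.
Proof.
  unfold sech, cosh. apply Rinv_0_lt_compat. generalize (exp_pos y) (exp_pos (- y)). lra.
Qed.

Lemma sech_le (y : R) : sech y <= 2 * exp (- y).
Proof.
  unfold sech, cosh. rewrite exp_Ropp.
  generalize (exp_pos y) (Rinv_0_lt_compat _ (exp_pos y)). intros Hy Hy'.
  replace (2 * / exp y) with (/ (exp y / 2)) by (field; apply Rgt_not_eq, exp_pos).
  apply Rinv_le_contravar; lra.
Qed.

Lemma exp_neg_abs_le_sech (y : R) : exp (- Rabs y) <= sech y.
Proof.
  unfold sech, cosh. rewrite exp_Ropp.
  assert (Hle : exp y + exp (- y) <= 2 * exp (Rabs y)).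
  { destruct (Rle_or_lt 0 y).
    - rewrite Rabs_right by lra. generalize (exp_le_exp (- y) y ltac:(lra)). lra.
    - rewrite Rabs_left by lra. generalize (exp_le_exp y (- y) ltac:(lra)). lra. }
  apply Rinv_le_contravar; [generalize (exp_pos y) (exp_pos (- y)); lra | lra].
Qed.

Lemma Rpower_exp (z r : R) : Rpower (exp z) r = exp (r * z).
Proof. unfold Rpower. rewrite ln_exp. reflexivity. Qed.

Section GroundState.
Variables (p omega gamma : R).
Hypotheses (Hp : 1 < p) (Homega : 0 < omega).

Let A := (p + 1) * omega / 2.
Let b := atanh (gamma / (2 * sqrt omega)).

Lemma ground_state_amplitude_pos : 0 < A.
Proof. unfold A. nra. Qed.

Lemma Qwg_pow_eq (x : R) :
  Rpower (Qwg p omega gamma x) (p - 1) = A * sech ((p - 1) * sqrt omega / 2 * Rabs x + b) ^ 2.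
Proof.
  unfold Qwg. rewrite Rpower_mult.
  replace (1 / (p - 1) * (p - 1)) with 1 by (field; lra).
  apply Rpower_1, Rmult_lt_0_compat; [apply ground_state_amplitude_pos|].
  apply pow_lt, sech_pos.
Qed.

Lemma Qwg_pow_decay : exists C, 0 <= C /\ forall x, 0 < x ->
  0 <= Rpower (Qwg p omega gamma x) (p - 1) <= C * exp (- ((p - 1) * sqrt omega) * x).
Proof.
  assert (HA := ground_state_amplitude_pos).
  exists (4 * A * exp (- 2 * b)). split; [generalize (exp_pos (- 2 * b)); nra|].
  intros x Hx. rewrite Qwg_pow_eq, Rabs_right by lra.
  set (y := (p - 1) * sqrt omega / 2 * x + b).
  assert (Hs := sech_pos y). assert (Hsl := sech_le y).
  assert (Hy : exp (- y) ^ 2 = exp (- 2 * b) * exp (- ((p - 1) * sqrt omega) * x)).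
  { simpl. rewrite Rmult_1_r, <- !exp_plus. apply f_equal. unfold y. lra. }
  assert (Hsq : sech y ^ 2 <= 4 * exp (- y) ^ 2).
  { replace (4 * exp (- y) ^ 2) with ((2 * exp (- y)) ^ 2) by ring.
    apply pow_incr. lra. }
  rewrite Hy in Hsq. split; [apply Rmult_le_pos; [lra | apply pow2_ge_0]|].
  apply (Rmult_le_compat_l A) in Hsq; lra.
Qed.

Lemma Qwg_lower : exists cQ, 0 < cQ /\ forall x,
  cQ * exp (- sqrt omega * Rabs x) <= Qwg p omega gamma x.
Proof.
  assert (HA := ground_state_amplitude_pos).
  assert (Hso : 0 < sqrt omega) by (apply sqrt_lt_R0; exact Homega).
  set (c0 := A * exp (- 2 * Rabs b)).
  assert (Hc0 : 0 < c0) by (apply Rmult_lt_0_compat; [exact HA | apply exp_pos]).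
  exists (Rpower c0 (1 / (p - 1))). split; [apply exp_pos|].
  intros x. unfold Qwg. fold A b.
  set (y := (p - 1) * sqrt omega / 2 * Rabs x + b).
  assert (Hy : Rabs y <= (p - 1) * sqrt omega / 2 * Rabs x + Rabs b).
  { unfold y. eapply Rle_trans; [apply Rabs_triang|].
    rewrite Rabs_mult, Rabs_Rabsolu, (Rabs_right ((p - 1) * sqrt omega / 2)) by nra. lra. }
  assert (Hsech : exp (- 2 * Rabs b) * exp (- ((p - 1) * sqrt omega) * Rabs x) <= sech y ^ 2).
  { rewrite <- exp_plus.
    apply Rle_trans with (exp (- Rabs y) ^ 2).
    - simpl. rewrite Rmult_1_r, <- exp_plus. apply exp_le_exp. lra.
    - apply pow_incr. split; [apply Rlt_le, exp_pos | apply exp_neg_abs_le_sech]. }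
  replace (- sqrt omega * Rabs x) with (1 / (p - 1) * (- ((p - 1) * sqrt omega) * Rabs x))
    by (field; lra).
  rewrite <- Rpower_exp, Rpower_mult_distr by (auto; apply exp_pos).
  apply Rle_Rpower_l; [apply Rlt_le, Rdiv_lt_0_compat; lra|].
  split; [apply Rmult_lt_0_compat; [exact Hc0 | apply exp_pos]|].
  unfold c0. rewrite Rmult_assoc. apply Rmult_le_compat_l; lra.
Qed.

End GroundState.

Section PerturbedSystem.
Variables (a c V1 V2 : R -> R) (omega e k l m CV B : R).
Hypotheses (Hk : 0 < k) (Hm : 0 < m)
  (Homega : k ^ 2 - l ^ 2 = omega) (He : - 2 * k * l = e)
  (Hda : forall t, 0 < t -> ex_derive a t /\ ex_derive (Derive a) t)
  (Hdc : forall t, 0 < t -> ex_derive c t /\ ex_derive (Derive c) t)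
  (Ea : forall t, 0 < t -> Derive (Derive a) t = omega * a t - e * c t - V1 t * a t)
  (Ec : forall t, 0 < t -> Derive (Derive c) t = omega * c t + e * a t - V2 t * c t)
  (HV1 : forall t, 0 < t -> Rabs (V1 t) <= CV * exp (- m * t))
  (HV2 : forall t, 0 < t -> Rabs (V2 t) <= CV * exp (- m * t))
  (HB : forall t, 0 < t -> a t ^ 2 + c t ^ 2 <= B)
  (Hsmall : forall x eps, 0 < x -> 0 < eps -> exists X, x <= X /\
      a X ^ 2 + c X ^ 2 + Derive a X ^ 2 + Derive c X ^ 2 <= eps).

(* With [u = a + i c] and [lambda = k - i l] (so [lambda^2 = omega + i e]), [w = w1 + i w2]
   is [u' + lambda u], which solves [w' = lambda w - (V1 a + i V2 c)]; [N = |w|^2]. *)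
Let w1 t := Derive a t + k * a t + l * c t.
Let w2 t := Derive c t + k * c t - l * a t.
Let N t := w1 t ^ 2 + w2 t ^ 2.

Lemma amplitude_bound_nonneg : 0 <= B.
Proof. generalize (HB 1 Rlt_0_1) (pow2_ge_0 (a 1)) (pow2_ge_0 (c 1)). lra. Qed.

Lemma N_is_derive (t : R) : 0 < t ->
  is_derive N t (2 * k * N t - 2 * V1 t * a t * w1 t - 2 * V2 t * c t * w2 t).
Proof.
  intros Ht. destruct (Hda t Ht) as [A1 A2], (Hdc t Ht) as [C1 C2].
  unfold N, w1, w2. auto_derive; [repeat split; auto|].
  change (Derive (fun s => a s) t) with (Derive a t).
  change (Derive (fun s => c s) t) with (Derive c t).
  change (Derive (fun s => Derive a s) t) with (Derive (Derive a) t).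
  change (Derive (fun s => Derive c s) t) with (Derive (Derive c) t).
  rewrite (Ea t Ht), (Ec t Ht), <- Homega, <- He. ring.
Qed.

(* Young's inequality [2 w f <= k w^2 + f^2 / k] on both forcing terms. *)
Lemma N_growth (t : R) : 0 < t ->
  k * N t - CV ^ 2 * B / k * exp (- (2 * m) * t) <=
  2 * k * N t - 2 * V1 t * a t * w1 t - 2 * V2 t * c t * w2 t.
Proof.
  intros Ht.
  assert (HV : forall V, Rabs V <= CV * exp (- m * t) -> V ^ 2 <= CV ^ 2 * exp (- (2 * m) * t)).
  { intros V HVt. rewrite <- pow2_abs.
    replace (exp (- (2 * m) * t)) with (exp (- m * t) ^ 2)
      by (simpl; rewrite Rmult_1_r, <- exp_plus; apply f_equal; lra).
    rewrite <- Rpow_mult_distr.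
    apply pow_incr. split; [apply Rabs_pos | exact HVt]. }
  assert (H1 := HV _ (HV1 t Ht)). assert (H2 := HV _ (HV2 t Ht)).
  assert (HBt := HB t Ht).
  assert (Hforce : (V1 t * a t) ^ 2 + (V2 t * c t) ^ 2 <= CV ^ 2 * exp (- (2 * m) * t) * B).
  { assert (H0a := pow2_ge_0 (a t)). assert (H0c := pow2_ge_0 (c t)).
    assert (H0E := pow2_ge_0 (V1 t)).
    apply Rle_trans with (CV ^ 2 * exp (- (2 * m) * t) * (a t ^ 2 + c t ^ 2)); [nra|].
    apply Rmult_le_compat_l; [nra | exact HBt]. }
  assert (Hy1 := pow2_ge_0 (k * w1 t - V1 t * a t)).
  assert (Hy2 := pow2_ge_0 (k * w2 t - V2 t * c t)).
  apply (Rmult_le_reg_l k); [exact Hk|].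
  unfold N. unfold Rdiv. field_simplify; [|lra]. nra.
Qed.

Lemma N_le (t : R) :
  N t <= 3 * (1 + k ^ 2 + l ^ 2) * (a t ^ 2 + c t ^ 2 + Derive a t ^ 2 + Derive c t ^ 2).
Proof.
  unfold N, w1, w2.
  generalize (pow2_ge_0 (Derive a t - k * a t)) (pow2_ge_0 (Derive a t - l * c t))
    (pow2_ge_0 (k * a t - l * c t)) (pow2_ge_0 (Derive c t - k * c t))
    (pow2_ge_0 (Derive c t + l * a t)) (pow2_ge_0 (k * c t + l * a t))
    (pow2_ge_0 (a t)) (pow2_ge_0 (c t)) (pow2_ge_0 (Derive a t)) (pow2_ge_0 (Derive c t))
    (pow2_ge_0 k) (pow2_ge_0 l).
  nra.
Qed.

Lemma N_decay : exists K1, 0 <= K1 /\ forall x, 0 < x -> N x <= K1 * exp (- (2 * m) * x).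
Proof.
  assert (HB0 := amplitude_bound_nonneg).
  exists (CV ^ 2 * B / k / (k + 2 * m)). split.
  { apply Rdiv_le_0_compat; [apply Rdiv_le_0_compat|]; try lra.
    apply Rmult_le_pos; [apply pow2_ge_0 | exact HB0]. }
  apply (decay_of_growth_inequality N
    (fun t => 2 * k * N t - 2 * V1 t * a t * w1 t - 2 * V2 t * c t * w2 t) k (2 * m));
    try lra.
  - apply Rdiv_le_0_compat; [apply Rmult_le_pos; [apply pow2_ge_0 | exact HB0] | exact Hk].
  - exact N_is_derive.
  - exact N_growth.
  - intros x eps Hx Heps.
    set (K := 3 * (1 + k ^ 2 + l ^ 2)).
    assert (HK : 0 < K) by (unfold K; generalize (pow2_ge_0 k) (pow2_ge_0 l); lra).
    destruct (Hsmall x (eps / K) Hx ltac:(apply Rdiv_lt_0_compat; lra)) as [X [HxX HX]].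
    exists X. split; [exact HxX|].
    apply Rle_trans with (K * (eps / K)); [|right; field; lra].
    eapply Rle_trans; [apply N_le|]. apply Rmult_le_compat_l; lra.
Qed.

(* [rho = a^2 + c^2] satisfies [rho' = -2 k rho + 2 a w1 + 2 c w2]; Young's inequality with
   weight [2 (k - mu)] leaves the damping rate [2 mu]. *)
Lemma amplitude_decay (mu : R) : 0 < mu -> mu < k -> mu < m ->
  exists R0, forall x, 0 < x -> a x ^ 2 + c x ^ 2 <= R0 * exp (- (2 * mu) * x).
Proof.
  intros Hmu Hmuk Hmum.
  destruct N_decay as [K1 [HK1 HN]].
  set (d := 2 * (k - mu)).
  apply (decay_of_damping_inequality (fun t => a t ^ 2 + c t ^ 2)
    (fun t => 2 * a t * Derive a t + 2 * c t * Derive c t) (2 * mu) (2 * m) (K1 / d) B);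
    try lra.
  - apply Rdiv_le_0_compat; unfold d; lra.
  - intros t Ht. destruct (Hda t Ht) as [A1 _], (Hdc t Ht) as [C1 _].
    auto_derive; [repeat split; auto|].
    change (Derive (fun s => a s) t) with (Derive a t).
    change (Derive (fun s => c s) t) with (Derive c t). ring.
  - intros t Ht. specialize (HN t Ht). unfold N in HN.
    assert (Hd : 0 < d) by (unfold d; lra).
    apply (Rmult_le_reg_l d); [exact Hd|].
    replace (d * (- (2 * mu) * (a t ^ 2 + c t ^ 2) + K1 / d * exp (- (2 * m) * t)))
      with (- 2 * mu * d * (a t ^ 2 + c t ^ 2) + K1 * exp (- (2 * m) * t)) by (field; lra).
    generalize (pow2_ge_0 (d * a t - w1 t)) (pow2_ge_0 (d * c t - w2 t)).
    unfold w1, w2, d in *. nra.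
  - intros t Ht. split; [generalize (pow2_ge_0 (a t)) (pow2_ge_0 (c t)); lra | exact (HB t Ht)].
Qed.

Lemma perturbed_system_decay (mu : R) : 0 < mu -> mu < k -> mu < m ->
  exists K, forall x, 0 < x ->
    a x ^ 2 + c x ^ 2 + Derive a x ^ 2 + Derive c x ^ 2 <= K * exp (- (2 * mu) * x).
Proof.
  intros Hmu Hmuk Hmum.
  destruct N_decay as [K1 [HK1 HN]].
  destruct (amplitude_decay mu Hmu Hmuk Hmum) as [R0 HR].
  exists ((1 + 2 * (k ^ 2 + l ^ 2)) * R0 + 2 * K1). intros x Hx.
  specialize (HN x Hx). specialize (HR x Hx).
  assert (Hexp : K1 * exp (- (2 * m) * x) <= K1 * exp (- (2 * mu) * x))
    by (apply Rmult_le_compat_l; [exact HK1 | apply exp_le_exp; nra]).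
  assert (Hkl : 0 <= k ^ 2 + l ^ 2) by (generalize (pow2_ge_0 k) (pow2_ge_0 l); lra).
  assert (Hderiv : Derive a x ^ 2 + Derive c x ^ 2 <=
                   2 * N x + 2 * (k ^ 2 + l ^ 2) * (a x ^ 2 + c x ^ 2)).
  { unfold N, w1, w2.
    generalize (pow2_ge_0 (Derive a x + 2 * (k * a x + l * c x)))
      (pow2_ge_0 (Derive c x + 2 * (k * c x - l * a x))). nra. }
  assert (2 * (k ^ 2 + l ^ 2) * (a x ^ 2 + c x ^ 2) <=
          2 * (k ^ 2 + l ^ 2) * (R0 * exp (- (2 * mu) * x)))
    by (apply Rmult_le_compat_l; lra).
  lra.
Qed.

End PerturbedSystem.

(* Witness [k = sqrt ((omega + |omega + i e|) / 2)], [l = - e / (2 k)], so that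
   [(k + i l)^2 = omega - i e]. *)
Lemma sqrt_omega_minus_ie (omega e : R) : 0 < omega -> e <> 0 ->
  exists k l, sqrt omega < k /\ k ^ 2 - l ^ 2 = omega /\ - 2 * k * l = e.
Proof.
  intros Ho He.
  set (s := sqrt (omega ^ 2 + e ^ 2)).
  assert (Hs2 : s * s = omega ^ 2 + e ^ 2)
    by (apply sqrt_sqrt; generalize (pow2_ge_0 omega) (pow2_ge_0 e); lra).
  assert (Hs : omega < s).
  { assert (0 < e ^ 2) by (apply pow2_gt_0; exact He).
    generalize (sqrt_pos (omega ^ 2 + e ^ 2)). fold s. nra. }
  set (k := sqrt ((omega + s) / 2)).
  assert (Hk2 : k * k = (omega + s) / 2) by (apply sqrt_sqrt; lra).
  assert (Hk : 0 < k) by (apply sqrt_lt_R0; lra).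
  assert (Hso2 : sqrt omega * sqrt omega = omega) by (apply sqrt_sqrt; lra).
  exists k, (- e / (2 * k)). repeat split.
  - generalize (sqrt_pos omega). nra.
  - apply (Rmult_eq_reg_r (4 * (k * k))); [|nra].
    field_simplify; [|lra]. replace (k ^ 4) with ((k * k) ^ 2) by ring.
    replace (k ^ 2) with (k * k) by ring. rewrite Hk2. nra.
  - field. lra.
Qed.

Lemma Derive_opp_of_even (f : R -> R) (x : R) :
  (forall y, f (- y) = f y) -> ex_derive f x -> Derive f (- x) = - Derive f x.
Proof.
  intros Heven Hd.
  rewrite (Derive_ext f (fun y => f (- y)) (- x)) by (intro; rewrite Heven; reflexivity).
  apply is_derive_unique. auto_derive; rewrite Ropp_involutive; [exact Hd|].
  change (Derive (fun s => f s) x) with (Derive f x). ring.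
Qed.

Lemma weighted_bounded_of_decay (p omega gamma mu K : R) (f : R -> R) :
  1 < p -> 0 < omega ->
  (forall x, 0 < x -> f (- x) ^ 2 = f x ^ 2) ->
  (forall x, 0 < x -> f x ^ 2 <= K * exp (- (2 * mu) * x)) ->
  weighted_bounded p omega gamma (mu - sqrt omega) f.
Proof.
  intros Hp Ho Hsym Hdecay.
  destruct (Qwg_lower p omega gamma Hp Ho) as [cQ [HcQ HQ]].
  assert (HK : 0 <= K).
  { generalize (Hdecay 1 Rlt_0_1) (pow2_ge_0 (f 1)) (exp_pos (- (2 * mu) * 1)). nra. }
  exists (sqrt K / cQ). intros x Hx.
  set (t := Rabs x).
  assert (Ht : 0 < t) by (apply Rabs_pos_lt; exact Hx).
  assert (Hft : f x ^ 2 <= K * exp (- (2 * mu) * t)).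
  { unfold t. destruct (Rle_or_lt 0 x).
    - rewrite Rabs_right by lra. apply Hdecay. lra.
    - rewrite Rabs_left by lra. rewrite <- (Ropp_involutive x) at 1.
      rewrite Hsym by lra. apply Hdecay. lra. }
  assert (Hf : Rabs (f x) <= sqrt K * exp (- mu * t)).
  { rewrite <- (Rabs_right (sqrt K * exp (- mu * t)))
      by (apply Rle_ge, Rmult_le_pos; [apply sqrt_pos | apply Rlt_le, exp_pos]).
    apply Rsqr_le_abs_0. rewrite !Rsqr_pow2, Rpow_mult_distr, pow2_sqrt by exact HK.
    replace (exp (- mu * t) ^ 2) with (exp (- (2 * mu) * t))
      by (simpl; rewrite Rmult_1_r, <- exp_plus; apply f_equal; lra).
    exact Hft. }
  assert (HQx := HQ x). fold t in HQx.
  assert (HQpos : 0 < Qwg p omega gamma x)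
    by (generalize (Rmult_lt_0_compat _ _ HcQ (exp_pos (- sqrt omega * t))); lra).
  assert (Hweight : exp ((mu - sqrt omega) * t) * exp (- mu * t) = exp (- sqrt omega * t))
    by (rewrite <- exp_plus; apply f_equal; ring).
  rewrite Rabs_div by lra.
  rewrite Rabs_mult, (Rabs_right (exp _)), (Rabs_right (Qwg _ _ _ x))
    by (apply Rle_ge, Rlt_le; (exact HQpos || apply exp_pos)).
  apply Rle_div_l; [exact HQpos|].
  apply Rle_trans with (sqrt K * exp (- sqrt omega * t)).
  - rewrite <- Hweight. generalize (exp_pos ((mu - sqrt omega) * t)). nra.
  - apply (Rmult_le_reg_l cQ); [exact HcQ|].
    replace (cQ * (sqrt K / cQ * Qwg p omega gamma x)) with (sqrt K * Qwg p omega gamma x)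
      by (field; lra).
    generalize (sqrt_pos K). nra.
Qed.

Lemma exists_far_small_of_L2R (f1 f2 f3 f4 : R -> R) :
  L2R f1 -> L2R f2 -> L2R f3 -> L2R f4 ->
  forall x eps, 0 < x -> 0 < eps ->
    exists X, x <= X /\ f1 X ^ 2 + f2 X ^ 2 + f3 X ^ 2 + f4 X ^ 2 <= eps.
Proof.
  intros L1 L2 L3 L4.
  apply bounded_tail_integrals_small.
  - intro t. generalize (pow2_ge_0 (f1 t)) (pow2_ge_0 (f2 t)) (pow2_ge_0 (f3 t))
      (pow2_ge_0 (f4 t)). lra.
  - apply bounded_tail_integrals_plus; [apply bounded_tail_integrals_plus;
      [apply bounded_tail_integrals_plus|]|]; apply bounded_tail_integrals_sq_of_L2R; assumption.
Qed.

Lemma eigenfunction_decay (gamma p omega e : R) (Y1 Y2 : R -> R) :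
  2 < p -> 0 < omega -> e <> 0 ->
  D_even gamma Y1 -> D_even gamma Y2 ->
  (forall x, x <> 0 -> Lplus p omega gamma Y1 x = e * Y2 x) ->
  (forall x, x <> 0 -> Lminus p omega gamma Y2 x = - e * Y1 x) ->
  exists mu K, sqrt omega < mu /\ forall x, 0 < x ->
    Y1 x ^ 2 + Y2 x ^ 2 + Derive Y1 x ^ 2 + Derive Y2 x ^ 2 <= K * exp (- (2 * mu) * x).
Proof.
  intros Hp Ho He [_ [_ [Hd1 [L1 [L1' _]]]]] [_ [_ [Hd2 [L2 [L2' _]]]]] HL1 HL2.
  assert (Hpos : forall t, 0 < t -> t <> 0) by (intros; lra).
  destruct (sqrt_omega_minus_ie omega e Ho He) as [k [l [Hk [Homega He']]]].
  assert (Hso : 0 < sqrt omega) by (apply sqrt_lt_R0; exact Ho).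
  set (m := (p - 1) * sqrt omega).
  assert (Hm : sqrt omega < m).
  { generalize (Rmult_lt_0_compat (p - 2) (sqrt omega) ltac:(lra) Hso). unfold m. lra. }
  destruct (Qwg_pow_decay p omega gamma ltac:(lra) Ho) as [C [HC HV]].
  set (V := fun t => Rpower (Qwg p omega gamma t) (p - 1)).
  destruct (sq_bounded_of_L2R Y1 (fun t Ht => Hd1 t (Hpos t Ht)) L1 L1') as [B1 HB1].
  destruct (sq_bounded_of_L2R Y2 (fun t Ht => Hd2 t (Hpos t Ht)) L2 L2') as [B2 HB2].
  set (mu := (sqrt omega + Rmin k m) / 2).
  assert (Hmin : sqrt omega < Rmin k m) by (apply Rmin_glb_lt; assumption).
  destruct (perturbed_system_decay Y1 Y2 (fun t => p * V t) V omega e k l m (p * C) (B1 + B2))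
    with (mu := mu) as [K HK];
    try (unfold mu; generalize (Rmin_l k m) (Rmin_r k m); lra).
  - intros t Ht. exact (Hd1 t (Hpos t Ht)).
  - intros t Ht. exact (Hd2 t (Hpos t Ht)).
  - intros t Ht. generalize (HL1 t (Hpos t Ht)). unfold Lplus, D2, V. lra.
  - intros t Ht. generalize (HL2 t (Hpos t Ht)). unfold Lminus, D2, V. lra.
  - intros t Ht. destruct (HV t Ht) as [HV0 HVt]. unfold V.
    rewrite Rabs_mult, !Rabs_right by lra. fold m in HVt.
    rewrite Rmult_assoc. apply Rmult_le_compat_l; lra.
  - intros t Ht. destruct (HV t Ht) as [HV0 HVt]. unfold V.
    rewrite Rabs_right by lra. fold m in HVt.
    apply Rle_trans with (C * exp (- m * t)); [exact HVt|].
    rewrite Rmult_assoc, <- (Rmult_1_l (C * exp (- m * t))) at 1.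
    apply Rmult_le_compat_r; [apply Rmult_le_pos; [exact HC | apply Rlt_le, exp_pos] | lra].
  - intros t Ht. generalize (HB1 t Ht) (HB2 t Ht). lra.
  - exact (exists_far_small_of_L2R _ _ _ _ L1 L2 L1' L2').
  - exists mu, K. split; [unfold mu; lra | exact HK].
Qed.

Theorem lemma2p21 :
  forall (gamma p omega e : R) (Y1 Y2 : R -> R),
    gamma < 0 -> 5 < p -> gamma ^ 2 / 4 < omega ->
    0 < e ->
    D_even gamma Y1 -> D_even gamma Y2 ->
    (forall x, x <> 0 -> Lplus p omega gamma Y1 x = e * Y2 x) ->
    (forall x, x <> 0 -> Lminus p omega gamma Y2 x = - e * Y1 x) ->
    exists eta : R, 0 < eta /\
      weighted_bounded p omega gamma eta Y1 /\
      weighted_bounded p omega gamma eta Y2 /\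
      weighted_bounded p omega gamma eta (Derive Y1) /\
      weighted_bounded p omega gamma eta (Derive Y2).
Proof.
  intros gamma p omega e Y1 Y2 _ Hp Hgap He HY1 HY2 HL1 HL2.
  assert (Ho : 0 < omega) by (generalize (pow2_ge_0 gamma); lra).
  destruct (eigenfunction_decay gamma p omega e Y1 Y2 ltac:(lra) Ho ltac:(lra) HY1 HY2 HL1 HL2)
    as [mu [K [Hmu HK]]].
  destruct HY1 as [Ev1 [_ [Hd1 _]]], HY2 as [Ev2 [_ [Hd2 _]]].
  assert (Hodd : forall f, (forall y, f (- y) = f y) ->
                 (forall y, y <> 0 -> ex_derive f y /\ ex_derive (Derive f) y) ->
                 forall x, 0 < x -> Derive f (- x) ^ 2 = Derive f x ^ 2).
  { intros f Hev Hd x Hx. rewrite (Derive_opp_of_even f x Hev); [ring|].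
    apply Hd. lra. }
  exists (mu - sqrt omega). split; [lra|].
  repeat split; apply (weighted_bounded_of_decay p omega gamma mu K); try lra;
    try (intros x Hx; rewrite ?Ev1, ?Ev2; reflexivity);
    try (apply Hodd; assumption);
    intros x Hx; generalize (HK x Hx) (pow2_ge_0 (Y1 x)) (pow2_ge_0 (Y2 x))
      (pow2_ge_0 (Derive Y1 x)) (pow2_ge_0 (Derive Y2 x)); lra.
Qed.
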